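(* Let $t$ be the left-hand side of a CRS rule following Barendregt's naming convention, and let $\mathit{Left}(t)=(\Delta,t')$. Then $\Delta\vdash t'$ is a closed nominal term-in-context.
   Context: CRSs: meta-terms $a\mid Z(t_1,\dots,t_n)\mid[a]t\mid f\,t\mid(t_1,\dots,t_n)$ over variables (identified with nominal atoms), meta-variables $Z$ with arities and function symbols. The left-hand side $l$ of a CRS rule is a closed meta-term (no free variables) of the form $f(s_1,\dots,s_n)$ in which every meta-variable occurs only as $Z(a_1,\dots,a_n)$ with pairwise distinct bound variables. Barendregt's convention: bound variables are pairwise distinct and distinct from free variables. Nominal terms: $a\mid\pi\cdot X\mid[a]s\mid f\,s\mid(s_1,\dots,s_n)$ with finite-support permutations $\pi$; freshness contexts are sets of $a\#X$. $\Delta\vdash t$ is closed if: (1) every atom occurrence $a$ in $t$ lies under an abstraction $[a]$; (2) if $\pi\cdot X$ is in the scope of an abstraction of $\pi(a)$ then every occurrence $\pi'\cdot X$ of $X$ in $t$ is in the scope of an abstraction of $\pi'(a)$, or $a\#X\in\Delta$; (3) for two occurrences $\pi_1\cdot X,\pi_2\cdot X$ and $a$ with $\pi_1(a)\neq\pi_2(a)$, if $a$ is not abstracted in one of the occurrences then $a\#X\in\Delta$. Translation: $\Phi_t(Z)=[a_1,\dots,a_n]$ if $Z(a_1,\dots,a_n)$ is the leftmost occurrence of $Z$ in $t$. For lists of distinct variables $[a_1,\dots,a_n],[b_1,\dots,b_n]$, $\Psi([a_1,\ldots,a_n],[b_1,\dots,b_n])$ is a permutation (list of swappings) $\pi$ with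 $\pi(a_k)=b_k$ for all $k$, obtained by closing each maximal chain of the injection $a_k\mapsto b_k$ into a cycle $(c_1,\dots,c_m)$ and decomposing it as $(c_1\ c_m)\cdots(c_1\ c_2)$. $\mathit{Left}(t)=(\Delta,t')$: $t'$ is $t$ with the leftmost occurrence of each $Z(a_1,\ldots,a_n)$ replaced by the nominal variable $Z$ and every other occurrence $Z(b_1,\dots,b_n)$ replaced by $\Psi(\Phi_t(Z),[b_1,\dots,b_n])\cdot Z$, all other constructs kept unchanged; $\Delta$ contains $b\#Z$ for every occurrence of $Z$ in $t$ and every variable $b$ abstracted above that occurrence with $b\notin\Phi_t(Z)$. *)

From Stdlib Require Import List Arith Bool.
Import ListNotations.

Definition atom := nat.   (* CRS variables = nominal atoms *)
Definition mvar := nat.   (* CRS meta-variables = nominal unknowns *)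
Definition fsym := nat.

Inductive mterm : Type :=
| MVar  : atom -> mterm
| MMeta : mvar -> list mterm -> mterm
| MAbs  : atom -> mterm -> mterm
| MApp  : fsym -> mterm -> mterm
| MTup  : list mterm -> mterm.

Fixpoint mvar_occs (B : list atom) (t : mterm) : list (list atom * atom) :=
  match t with
  | MVar a => [(B, a)]
  | MMeta _ ts => (fix go ts := match ts with
                   | [] => [] | u :: us => mvar_occs B u ++ go us end) ts
  | MAbs a s => mvar_occs (a :: B) s
  | MApp _ s => mvar_occs B s
  | MTup ts => (fix go ts := match ts with
                | [] => [] | u :: us => mvar_occs B u ++ go us end) ts
  end.

Fixpoint meta_occs (B : list atom) (t : mterm)
  : list (list atom * mvar * list mterm) :=
  match t with
  | MVar _ => []
  | MMeta Z ts => (B, Z, ts) :: (fix go ts := match ts with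
                   | [] => [] | u :: us => meta_occs B u ++ go us end) ts
  | MAbs a s => meta_occs (a :: B) s
  | MApp _ s => meta_occs B s
  | MTup ts => (fix go ts := match ts with
                | [] => [] | u :: us => meta_occs B u ++ go us end) ts
  end.

Fixpoint mbinders (t : mterm) : list atom :=
  match t with
  | MVar _ => []
  | MMeta _ ts => (fix go ts := match ts with
                   | [] => [] | u :: us => mbinders u ++ go us end) ts
  | MAbs a s => a :: mbinders s
  | MApp _ s => mbinders s
  | MTup ts => (fix go ts := match ts with
                | [] => [] | u :: us => mbinders u ++ go us end) ts
  end.

Definition mclosed (t : mterm) : Prop :=
  forall B a, In (B, a) (mvar_occs [] t) -> In a B.

Definition crs_lhs (t : mterm) : Prop :=
  (exists f ss, t = MApp f (MTup ss)) /\
  mclosed t /\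
  (forall B Z args, In (B, Z, args) (meta_occs [] t) ->
     exists xs, args = map MVar xs /\ NoDup xs /\ (forall x, In x xs -> In x B)) /\
  (forall B1 B2 Z args1 args2,
     In (B1, Z, args1) (meta_occs [] t) -> In (B2, Z, args2) (meta_occs [] t) ->
     length args1 = length args2).

Definition barendregt (t : mterm) : Prop :=
  NoDup (mbinders t) /\
  (forall B a, In (B, a) (mvar_occs [] t) -> ~ In a B -> ~ In a (mbinders t)).

Definition perm := list (atom * atom).

Definition swap_app (s : atom * atom) (c : atom) : atom :=
  let (a, b) := s in
  if c =? a then b else if c =? b then a else c.

(** [s1; ...; sk] denotes s1 ∘ ... ∘ sk (sk applied first). *)
Definition perm_app (p : perm) (c : atom) : atom := fold_right swap_app c p.

Inductive nterm : Type :=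
| NAtom : atom -> nterm
| NSusp : perm -> mvar -> nterm
| NAbs  : atom -> nterm -> nterm
| NApp  : fsym -> nterm -> nterm
| NTup  : list nterm -> nterm.

Definition fctx := list (atom * mvar).  (* a#X  is  (a, X) *)

Fixpoint natom_occs (B : list atom) (t : nterm) : list (list atom * atom) :=
  match t with
  | NAtom a => [(B, a)]
  | NSusp _ _ => []
  | NAbs a s => natom_occs (a :: B) s
  | NApp _ s => natom_occs B s
  | NTup ts => (fix go ts := match ts with
                | [] => [] | u :: us => natom_occs B u ++ go us end) ts
  end.

Fixpoint nvar_occs (B : list atom) (t : nterm) : list (list atom * perm * mvar) :=
  match t with
  | NAtom _ => []
  | NSusp p X => [(B, p, X)]
  | NAbs a s => nvar_occs (a :: B) s
  | NApp _ s => nvar_occs B s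
  | NTup ts => (fix go ts := match ts with
                | [] => [] | u :: us => nvar_occs B u ++ go us end) ts
  end.

Definition nclosed (D : fctx) (t : nterm) : Prop :=
  (forall B a, In (B, a) (natom_occs [] t) -> In a B) /\
  (forall B1 p1 B2 p2 X a,
     In (B1, p1, X) (nvar_occs [] t) -> In (B2, p2, X) (nvar_occs [] t) ->
     In (perm_app p1 a) B1 ->
     In (perm_app p2 a) B2 \/ In (a, X) D) /\
  (forall B1 p1 B2 p2 X a,
     In (B1, p1, X) (nvar_occs [] t) -> In (B2, p2, X) (nvar_occs [] t) ->
     perm_app p1 a <> perm_app p2 a ->
     (~ In (perm_app p1 a) B1 \/ ~ In (perm_app p2 a) B2) ->
     In (a, X) D).

Fixpoint lookup (xs ys : list atom) (x : atom) : option atom :=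
  match xs, ys with
  | a :: xs', b :: ys' => if x =? a then Some b else lookup xs' ys' x
  | _, _ => None
  end.

Fixpoint walk (xs ys : list atom) (c : atom) (fuel : nat) (x : atom) : list atom :=
  match fuel with
  | 0 => []
  | S n => match lookup xs ys x with
           | Some y => if y =? c then [] else y :: walk xs ys c n y
           | None => []
           end
  end.

(** The maximal chain (or cycle) [c1; ...; cm] starting at c. *)
Definition chain (xs ys : list atom) (c : atom) : list atom :=
  c :: walk xs ys c (length xs) c.

Definition closes (xs ys : list atom) (c : atom) (C : list atom) : bool :=
  match lookup xs ys (last C c) with Some y => y =? c | None => false end.

Definition firstin (xs C : list atom) : option atom :=
  find (fun x => existsb (Nat.eqb x) C) xs.

(** c is the chosen starting point of a maximal chain: either the start of an
    open chain (not in the image), or the first (in xs) element of a cycle. *)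
Definition is_start (xs ys : list atom) (c : atom) : bool :=
  negb (existsb (Nat.eqb c) ys) ||
  (closes xs ys c (chain xs ys c) &&
   match firstin xs (chain xs ys c) with Some d => d =? c | None => false end).

(** cycle (c1 ... cm) decomposed as (c1 cm) ... (c1 c2) *)
Definition cycle_swaps (C : list atom) : perm :=
  match C with
  | [] => []
  | c1 :: rest => map (fun c => (c1, c)) (rev rest)
  end.

Definition Psi (xs ys : list atom) : perm :=
  flat_map (fun c => if is_start xs ys c then cycle_swaps (chain xs ys c) else [])
           xs.

Definition arg_atoms (args : list mterm) : list atom :=
  flat_map (fun u => match u with MVar a => [a] | _ => [] end) args.

(** Φ_t(Z): arguments of the leftmost occurrence of Z in t. *)
Definition Phi (t : mterm) (Z : mvar) : list atom :=
  match find (fun o => match o with (_, Z', _) => Z' =? Z end) (meta_occs [] t) with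
  | Some (_, _, args) => arg_atoms args
  | None => []
  end.

Fixpoint trans (phi : mvar -> list atom) (seen : list mvar) (t : mterm)
  : nterm * list mvar :=
  match t with
  | MVar a => (NAtom a, seen)
  | MMeta Z args =>
      if existsb (Nat.eqb Z) seen
      then (NSusp (Psi (phi Z) (arg_atoms args)) Z, seen)
      else (NSusp [] Z, Z :: seen)
  | MAbs a s => let (s', sn) := trans phi seen s in (NAbs a s', sn)
  | MApp f s => let (s', sn) := trans phi seen s in (NApp f s', sn)
  | MTup ts =>
      let (ts', sn) :=
        (fix go seen ts := match ts with
         | [] => ([], seen)
         | u :: us => let (u', s1) := trans phi seen u in
                      let (us', s2) := go s1 us in (u' :: us', s2)
         end) seen ts in
      (NTup ts', sn)
  end.

Definition Delta (t : mterm) : fctx :=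
  flat_map (fun o => match o with (B, Z, _) =>
              map (fun b => (b, Z))
                  (filter (fun b => negb (existsb (Nat.eqb b) (Phi t Z))) B)
            end) (meta_occs [] t).

Definition Left (t : mterm) : fctx * nterm :=
  (Delta t, fst (trans (Phi t) [] t)).

From Stdlib Require Import List Arith Bool Lia Permutation.
Import ListNotations.

(** Every suspension [p·Z] of [Left t] comes from an occurrence [Z(b_1,...,b_n)]
    below binders [B], with [p = Psi (Phi t Z) [b_1;...;b_n]], or [p] the identity
    at the leftmost occurrence, where [Phi t Z = [b_1;...;b_n]].  As the [b_k] are
    bound above the occurrence, [p] maps [Phi t Z] into [B]; [p] only moves atoms
    of [Phi t Z] and the [b_k]; and every other atom of [B] is declared fresh for
    [Z] in [Delta t].  These three facts give conditions (2) and (3) of closedness,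
    while (1) is the closedness of [t].  The combinatorial core is that [Psi],
    assembled from the cycles of the injection [a_k |-> b_k], maps [a_k] to [b_k]:
    each [a_k] lies on exactly one chosen chain, whose swaps move it one step
    along the chain, and the swaps of all other chains fix it. *)

Lemma last_cons {A} (y : A) l d : last (y :: l) d = last l y.
Proof.
  revert y d; induction l as [|z l IH]; intros y d; [reflexivity|].
  transitivity (last (z :: l) d); [reflexivity|]; now rewrite !IH.
Qed.

Lemma last_in {A} (l : list A) d : In (last l d) (d :: l).
Proof.
  revert d; induction l as [|z l IH]; intros d; [now left|].
  rewrite last_cons; right; apply IH.
Qed.

Lemma last_app {A} (l1 l2 : list A) d : last (l1 ++ l2) d = last l2 (last l1 d).
Proof.
  revert d; induction l1 as [|a l1 IH]; intros d; [reflexivity|].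
  cbn [app]; rewrite !last_cons; apply IH.
Qed.

Lemma in_tail_of_split {A} (h : A) rest l1 u v l2 :
  h :: rest = l1 ++ u :: v :: l2 -> In v rest.
Proof.
  destruct l1 as [|w l1]; cbn; intros H; injection H as -> ->; [now left|].
  apply in_or_app; right; right; now left.
Qed.

Lemma existsb_eqb_In x l : existsb (Nat.eqb x) l = true <-> In x l.
Proof.
  rewrite existsb_exists; split.
  - intros [y [Hy E]]; apply Nat.eqb_eq in E; now subst.
  - intros H; exists x; now rewrite Nat.eqb_refl.
Qed.

Lemma find_ext {A} (p q : A -> bool) l : (forall x, p x = q x) -> find p l = find q l.
Proof. intros H; induction l as [|a l IH]; cbn; [reflexivity|]; now rewrite H, IH. Qed.

Lemma find_app_Some {A} (p : A -> bool) l1 l2 o :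
  find p l1 = Some o -> find p (l1 ++ l2) = Some o.
Proof. induction l1 as [|a l1 IH]; cbn; [discriminate|]; now destruct (p a). Qed.

Lemma find_app_None {A} (p : A -> bool) l1 l2 :
  find p l1 = None -> find p (l1 ++ l2) = find p l2.
Proof. induction l1 as [|a l1 IH]; cbn; [reflexivity|]; now destruct (p a). Qed.

Lemma find_both {A} (l : list A) p q a b : NoDup l ->
  find p l = Some a -> find q l = Some b -> p b = true -> q a = true -> a = b.
Proof.
  induction 1 as [|x l Hx _ IH]; cbn; [discriminate|].
  destruct (p x) eqn:Ep, (q x) eqn:Eq; try congruence; auto.
Qed.

Lemma NoDup_snoc_inv {A} (l : list A) z : NoDup (l ++ [z]) -> NoDup l /\ ~ In z l.
Proof.
  intros H; apply NoDup_remove in H; now rewrite app_nil_r in H.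
Qed.

(** * Paths along a partial function *)

Section Paths.

Context {A : Type} (g : A -> option A).

Inductive fpath : A -> list A -> Prop :=
| fpath_nil a : fpath a []
| fpath_cons a b l : g a = Some b -> fpath b l -> fpath a (b :: l).

Lemma fpath_app x l1 l2 :
  fpath x (l1 ++ l2) <-> fpath x l1 /\ fpath (last l1 x) l2.
Proof.
  revert x; induction l1 as [|b l1 IH]; intros x; cbn [app].
  - split; [split; [constructor|assumption]|tauto].
  - rewrite last_cons; split.
    + inversion 1 as [|? ? ? Hg Hp]; subst; apply IH in Hp as [? ?].
      split; [constructor|]; assumption.
    + intros [Hp Hl]; inversion Hp; subst; constructor; [|apply IH]; tauto.
Qed.

Lemma fpath_pred {x l b} : fpath x l -> In b l ->
  exists u, In u (x :: l) /\ g u = Some b.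
Proof.
  induction 1 as [a|a c l Hg Hp IH]; [destruct 1|].
  intros [<-|Hb]; [exists a; split; [now left|exact Hg]|].
  destruct (IH Hb) as [u [Hu Hgu]]; exists u; split; [right|]; assumption.
Qed.

Lemma fpath_step {x l l1 u v l2} : fpath x l ->
  x :: l = l1 ++ u :: v :: l2 -> g u = Some v.
Proof.
  revert x l1; induction l as [|b l IH]; intros x l1 Hp E.
  - destruct l1 as [|? [|? ?]]; discriminate.
  - inversion Hp; subst.
    destruct l1 as [|w l1]; injection E; intros; subst; eauto.
Qed.

Lemma fpath_defined {x l} : fpath x l -> (exists v, g (last l x) = Some v) ->
  forall u, In u (x :: l) -> exists v, g u = Some v.
Proof.
  induction 1 as [a|a b l Hg Hp IH]; intros Hl u Hu.
  - destruct Hu as [<-|[]]; exact Hl.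
  - rewrite last_cons in Hl; destruct Hu as [<-|Hu]; eauto.
Qed.

Lemma fpath_rotate {h l1 d l2} :
  fpath h (l1 ++ d :: l2) -> g (last (l1 ++ d :: l2) h) = Some h ->
  fpath d (l2 ++ h :: l1) /\ g (last (l2 ++ h :: l1) d) = Some d.
Proof.
  rewrite fpath_app, !last_app, !last_cons; intros [H1 H2] Hl.
  inversion H2 as [|? ? ? Hg Hp2]; subst.
  split; [apply fpath_app; split; [|constructor]|]; assumption.
Qed.

Hypothesis g_inj : forall {a b y}, g a = Some y -> g b = Some y -> a = b.

Lemma fpath_NoDup {x l} : fpath x l -> ~ In x l -> NoDup (x :: l).
Proof.
  induction 1 as [a|a b l Hg Hp IH]; intros Hx.
  - repeat constructor; tauto.
  - constructor; [assumption|]; apply IH; intros Hb.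
    destruct (fpath_pred Hp Hb) as [u [Hu Hgu]].
    rewrite (g_inj Hgu Hg) in Hu; destruct Hu as [->|Hu]; apply Hx; [now left|now right].
Qed.

Lemma fpath_meet {c Wc d Wd l1 a l2 m1 m2} : fpath c Wc -> fpath d Wd ->
  c :: Wc = l1 ++ a :: l2 -> d :: Wd = m1 ++ a :: m2 ->
  In c (d :: Wd) \/ In d (c :: Wc).
Proof.
  intros Hc Hd; revert a l2 m1 m2.
  induction l1 as [|u l1 IH] using rev_ind; intros a l2 m1 m2 E1 E2.
  - injection E1 as <- _; left; rewrite E2; apply in_or_app; right; now left.
  - destruct m1 as [|u' m1 _] using rev_ind.
    + injection E2 as <- _; right; rewrite E1; apply in_or_app; right; now left.
    + rewrite <- app_assoc in E1, E2; cbn in E1, E2.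
      assert (u = u') as <- by exact (g_inj (fpath_step Hc E1) (fpath_step Hd E2)).
      exact (IH u (a :: l2) m1 (a :: m2) E1 E2).
Qed.

Lemma fpath_into_cycle {c Wc d Wd m1 e m2} :
  fpath c Wc -> g (last Wc c) = Some c -> fpath d Wd ->
  d :: Wd = m1 ++ e :: m2 -> In e (c :: Wc) -> In d (c :: Wc).
Proof.
  intros Hc Hcl Hd; revert e m2.
  induction m1 as [|u m1 IH] using rev_ind; intros e m2 E He.
  - now injection E as ->.
  - rewrite <- app_assoc in E; cbn in E.
    assert (Hpred : exists u', In u' (c :: Wc) /\ g u' = Some e).
    { destruct He as [<-|He]; [exists (last Wc c); split; [apply last_in|exact Hcl]|].
      exact (fpath_pred Hc He). }
    destruct Hpred as [u' [Hu' Hg]].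
    rewrite (g_inj (fpath_step Hd E) Hg) in E; exact (IH u' (e :: m2) E Hu').
Qed.

End Paths.

(** * Permutations as lists of swappings *)

Lemma perm_app_app p q a : perm_app (p ++ q) a = perm_app p (perm_app q a).
Proof. apply fold_right_app. Qed.

Lemma perm_app_cons s p a : perm_app (s :: p) a = swap_app s (perm_app p a).
Proof. reflexivity. Qed.

Lemma swap_app_id u v a : a <> u -> a <> v -> swap_app (u, v) a = a.
Proof.
  cbn; intros; destruct (Nat.eqb_spec a u), (Nat.eqb_spec a v); congruence.
Qed.

Lemma perm_app_moved p a : perm_app p a <> a ->
  exists u v, In (u, v) p /\ (a = u \/ a = v).
Proof.
  induction p as [|[u v] p IH]; [cbn; tauto|]; rewrite perm_app_cons; intros H.
  destruct (Nat.eq_dec (perm_app p a) a) as [E|E].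
  - exists u, v; split; [now left|]; rewrite E in H.
    destruct (Nat.eq_dec a u); [now left|]; destruct (Nat.eq_dec a v); [now right|].
    now rewrite swap_app_id in H.
  - destruct (IH E) as [u' [v' [? ?]]]; exists u', v'; split; [now right|assumption].
Qed.

Lemma perm_app_stable p C a : (forall u v, In (u, v) p -> In u C /\ In v C) ->
  In a C -> In (perm_app p a) C.
Proof.
  induction p as [|[u v] p IH]; intros H Ha; [exact Ha|].
  rewrite perm_app_cons; cbn [swap_app].
  destruct (H u v (or_introl eq_refl)).
  destruct (perm_app p a =? u), (perm_app p a =? v); auto with datatypes.
Qed.

Lemma cycle_swaps_snoc c rest z :
  cycle_swaps (c :: rest ++ [z]) = (c, z) :: cycle_swaps (c :: rest).
Proof. cbn; now rewrite rev_app_distr. Qed.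

Lemma cycle_swaps_support C u v : In (u, v) (cycle_swaps C) -> In u C /\ In v C.
Proof.
  destruct C as [|c rest]; [destruct 1|]; cbn.
  intros [w [[= <- <-] Hw]]%in_map_iff; split; [now left|right; now apply in_rev].
Qed.

Lemma cycle_swaps_stable C a : In a C -> In (perm_app (cycle_swaps C) a) C.
Proof. apply perm_app_stable, cycle_swaps_support. Qed.

Lemma cycle_swaps_id C a : ~ In a C -> perm_app (cycle_swaps C) a = a.
Proof.
  intros Ha; destruct (Nat.eq_dec (perm_app (cycle_swaps C) a) a) as [E|E]; [exact E|].
  destruct (perm_app_moved _ _ E) as [u [v [Huv [->| ->]]]];
    apply cycle_swaps_support in Huv; tauto.
Qed.

Lemma cycle_swaps_last c rest : NoDup (c :: rest) ->
  perm_app (cycle_swaps (c :: rest)) (last rest c) = c.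
Proof.
  destruct rest as [|z rest _] using rev_ind; [reflexivity|].
  intros Hnd; rewrite app_comm_cons in Hnd; apply NoDup_snoc_inv in Hnd as [Hnd Hz].
  rewrite cycle_swaps_snoc, last_last, perm_app_cons, (cycle_swaps_id _ _ Hz).
  cbn; destruct (Nat.eqb_spec z c); [assumption|now rewrite Nat.eqb_refl].
Qed.

Lemma cycle_swaps_succ c rest l1 u v l2 : NoDup (c :: rest) ->
  c :: rest = l1 ++ u :: v :: l2 -> perm_app (cycle_swaps (c :: rest)) u = v.
Proof.
  revert l1 u v l2; induction rest as [|z rest IH] using rev_ind;
    intros l1 u v l2 Hnd E.
  { destruct l1 as [|? [|? ?]]; discriminate. }
  rewrite app_comm_cons in Hnd; apply NoDup_snoc_inv in Hnd as [Hnd Hz].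
  rewrite cycle_swaps_snoc, perm_app_cons.
  destruct l2 as [|w l2 _] using rev_ind.
  - assert (E' : (l1 ++ [u]) ++ [v] = (c :: rest) ++ [z])
      by (rewrite <- app_assoc; exact (eq_sym E)).
    apply app_inj_tail in E' as [E' <-].
    assert (u = last rest c) as ->
      by (rewrite <- (last_cons c rest c), <- E'; symmetry; apply last_last).
    rewrite cycle_swaps_last by exact Hnd; cbn; now rewrite Nat.eqb_refl.
  - assert (E' : (l1 ++ u :: v :: l2) ++ [w] = (c :: rest) ++ [z])
      by (rewrite <- app_assoc; exact (eq_sym E)).
    apply app_inj_tail in E' as [E' _].
    rewrite (IH l1 u v l2 Hnd (eq_sym E')).
    pose proof (in_tail_of_split _ _ _ _ _ _ (eq_sym E')) as Hv.
    apply swap_app_id; intros ->; [inversion Hnd; tauto|apply Hz; now right].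
Qed.

(** * The permutation [Psi] *)

Lemma lookup_Some_in xs ys x y : lookup xs ys x = Some y -> In x xs /\ In y ys.
Proof.
  revert ys; induction xs as [|a xs IH]; intros [|b ys]; cbn; try discriminate.
  destruct (Nat.eqb_spec x a) as [->|_]; [intros [= <-]; auto|].
  intros [? ?]%IH; auto.
Qed.

Lemma lookup_defined xs ys x : length xs = length ys -> In x xs ->
  exists y, lookup xs ys x = Some y.
Proof.
  revert ys; induction xs as [|a xs IH]; intros [|b ys]; cbn; try discriminate; try tauto.
  intros [=Hl] Hx; destruct (Nat.eqb_spec x a) as [->|Hne]; [eauto|].
  destruct Hx as [->|Hx]; [congruence|auto].
Qed.

Lemma lookup_inj xs ys a b y : NoDup ys ->
  lookup xs ys a = Some y -> lookup xs ys b = Some y -> a = b.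
Proof.
  revert ys; induction xs as [|u xs IH]; intros [|v ys]; cbn; try discriminate.
  inversion 1; subst.
  destruct (Nat.eqb_spec a u) as [->|], (Nat.eqb_spec b u) as [->|]; auto;
    [intros [= <-] ?%lookup_Some_in|intros ?%lookup_Some_in [= <-]|]; eauto; tauto.
Qed.

Lemma lookup_onto xs ys y : NoDup xs -> length xs = length ys -> In y ys ->
  exists x, lookup xs ys x = Some y.
Proof.
  revert ys; induction xs as [|u xs IH]; intros [|v ys]; cbn; try discriminate; try tauto.
  intros Hnd [=Hl] [->|Hy]; [exists u; now rewrite Nat.eqb_refl|].
  inversion Hnd; subst; destruct (IH ys) as [x Hx]; auto.
  exists x; destruct (Nat.eqb_spec x u) as [->|]; [|exact Hx].
  apply lookup_Some_in in Hx; tauto.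
Qed.

Definition chain_swaps (xs ys : list atom) (c : atom) : perm :=
  if is_start xs ys c then cycle_swaps (chain xs ys c) else [].

Section Psi.

Variables xs ys : list atom.

Notation step := (lookup xs ys).

Lemma walk_fpath c fuel x : fpath step x (walk xs ys c fuel x).
Proof.
  revert x; induction fuel as [|n IH]; intros x; cbn; [constructor|].
  destruct (step x) as [y|] eqn:E; [|constructor].
  destruct (y =? c); constructor; auto.
Qed.

Lemma walk_avoids c fuel x : ~ In c (walk xs ys c fuel x).
Proof.
  revert x; induction fuel as [|n IH]; intros x; cbn; [tauto|].
  destruct (step x) as [y|]; [|tauto].
  destruct (Nat.eqb_spec y c); [tauto|]; intros [?|?]; [congruence|eapply IH; eauto].
Qed.

Lemma walk_end c fuel x :
  length (walk xs ys c fuel x) = fuel \/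
  step (last (walk xs ys c fuel x) x) = None \/
  step (last (walk xs ys c fuel x) x) = Some c.
Proof.
  revert x; induction fuel as [|n IH]; intros x; cbn [walk]; [auto|].
  destruct (step x) as [y|] eqn:E; [|cbn; rewrite E; auto].
  destruct (Nat.eqb_spec y c) as [->|]; [cbn; rewrite E; auto|].
  rewrite last_cons; cbn [length]; destruct (IH y) as [H|H]; auto.
Qed.

Lemma walk_prefix c L fuel x : fpath step x L -> ~ In c L -> length L <= fuel ->
  walk xs ys c fuel x = L ++ walk xs ys c (fuel - length L) (last L x).
Proof.
  revert fuel x; induction L as [|b L IH]; intros fuel x Hp Hc Hl.
  - cbn; now rewrite Nat.sub_0_r.
  - inversion Hp as [|? ? ? Hg Hp']; subst.
    destruct fuel as [|n]; cbn in Hl; [lia|].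
    cbn [walk]; rewrite Hg.
    destruct (Nat.eqb_spec b c) as [->|]; [cbn in Hc; tauto|].
    rewrite last_cons; cbn [length app Nat.sub]; f_equal.
    apply IH; [assumption|cbn in Hc; tauto|lia].
Qed.

Lemma walk_stop c fuel w : step w = Some c -> walk xs ys c fuel w = [].
Proof. intros H; destruct fuel; cbn; [|rewrite H, Nat.eqb_refl]; reflexivity. Qed.

Lemma chain_in c a : In a (chain xs ys c) -> a = c \/ In a ys.
Proof.
  intros [<-|H]; [now left|right].
  destruct (fpath_pred _ (walk_fpath c (length xs) c) H) as [u [_ Hu]].
  exact (proj2 (lookup_Some_in _ _ _ _ Hu)).
Qed.

Hypothesis ys_NoDup : NoDup ys.

Lemma step_inj a b y : step a = Some y -> step b = Some y -> a = b.
Proof. exact (lookup_inj _ _ _ _ _ ys_NoDup). Qed.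

Lemma chain_NoDup c : NoDup (chain xs ys c).
Proof. apply (fpath_NoDup _ step_inj); [apply walk_fpath|apply walk_avoids]. Qed.

(** The fuel [length xs] suffices: a walk that long would repeat a point. *)
Lemma chain_step c x y : In x (chain xs ys c) -> step x = Some y ->
  perm_app (cycle_swaps (chain xs ys c)) x = y.
Proof.
  intros Hin Hxy; pose proof (chain_NoDup c) as Hnd.
  unfold chain in *; set (W := walk xs ys c (length xs) c) in *.
  destruct (in_split _ _ Hin) as [l1 [[|v l2] E]].
  - assert (Hx : last W c = x)
      by (rewrite <- (last_cons c W c), E; apply last_last).
    rewrite <- Hx in *; rewrite cycle_swaps_last by exact Hnd.
    destruct (walk_end c (length xs) c) as [HW|[HW|HW]]; fold W in HW; [|congruence..].
    exfalso.
    assert (Hincl : incl (c :: W) xs).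
    { intros u Hu.
      destruct (fpath_defined _ (walk_fpath c (length xs) c) (ex_intro _ y Hxy) u Hu)
        as [v' Hv'].
      exact (proj1 (lookup_Some_in _ _ _ _ Hv')). }
    pose proof (NoDup_incl_length Hnd Hincl); cbn in *; lia.
  - rewrite (cycle_swaps_succ _ _ _ _ _ _ Hnd E).
    pose proof (fpath_step _ (walk_fpath c (length xs) c) E); congruence.
Qed.

Lemma is_start_cycle c : is_start xs ys c = true -> In c ys ->
  step (last (chain xs ys c) c) = Some c /\ firstin xs (chain xs ys c) = Some c.
Proof.
  unfold is_start, closes; intros H Hc.
  apply existsb_eqb_In in Hc; rewrite Hc in H; cbn [negb orb] in H.
  apply andb_true_iff in H as [H1 H2].
  destruct (step (last (chain xs ys c) c)) as [y|]; [|discriminate].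
  destruct (firstin xs (chain xs ys c)) as [d|]; [|discriminate].
  apply Nat.eqb_eq in H1, H2; subst; auto.
Qed.

Hypothesis xs_NoDup : NoDup xs.

Lemma start_in_chain c d : is_start xs ys c = true -> is_start xs ys d = true ->
  In c (chain xs ys d) -> c = d.
Proof.
  intros Hc Hd Hin; destruct (Nat.eq_dec c d) as [|Hne]; [assumption|].
  assert (Hcy : In c ys) by (destruct (chain_in _ _ Hin); [congruence|assumption]).
  destruct (is_start_cycle c Hc Hcy) as [Hcl Hfc].
  assert (Hdc : In d (chain xs ys c)).
  { unfold chain in Hin, Hcl |- *; destruct (in_split _ _ Hin) as [m1 [m2 E]].
    rewrite last_cons in Hcl.
    exact (fpath_into_cycle _ step_inj (walk_fpath _ _ _) Hcl (walk_fpath _ _ _) E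
             (or_introl eq_refl)). }
  assert (Hdy : In d ys) by (destruct (chain_in _ _ Hdc); [congruence|assumption]).
  destruct (is_start_cycle d Hd Hdy) as [_ Hfd].
  apply (find_both _ _ _ _ _ xs_NoDup Hfc Hfd); now apply existsb_eqb_In.
Qed.

Lemma chain_disjoint c d a : is_start xs ys c = true -> is_start xs ys d = true ->
  In a (chain xs ys c) -> In a (chain xs ys d) -> c = d.
Proof.
  intros Hc Hd Ha Hb.
  destruct (in_split _ _ Ha) as [l1 [l2 E1]], (in_split _ _ Hb) as [m1 [m2 E2]].
  unfold chain in *.
  destruct (fpath_meet _ step_inj (walk_fpath _ _ _) (walk_fpath _ _ _) E1 E2) as [H|H].
  - exact (start_in_chain c d Hc Hd H).
  - exact (eq_sym (start_in_chain d c Hd Hc H)).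
Qed.

Lemma chain_of_cycle d R : fpath step d R -> step (last R d) = Some d ->
  NoDup (d :: R) -> length R < length xs -> chain xs ys d = d :: R.
Proof.
  intros Hp Hl Hnd HR; inversion Hnd; subst; unfold chain.
  rewrite (walk_prefix d R (length xs) d Hp), walk_stop by (assumption || lia).
  now rewrite app_nil_r.
Qed.

(** The started chain of a cycle begins at its first element in [xs]. *)
Lemma cycle_covered z L : fpath step z L -> NoDup (z :: L) ->
  step (last L z) = Some z -> incl (z :: L) xs -> forall x, In x (z :: L) ->
  exists c, In c xs /\ is_start xs ys c = true /\ In x (chain xs ys c).
Proof.
  intros Hp Hnd Hl Hincl x Hx.
  set (p := fun u => existsb (Nat.eqb u) (z :: L)).
  destruct (find p xs) as [d|] eqn:Ef.
  2:{ exfalso; pose proof (find_none _ _ Ef z (Hincl z (or_introl eq_refl))) as H.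
      unfold p in H; cbn in H; now rewrite Nat.eqb_refl in H. }
  destruct (find_some _ _ Ef) as [Hdx Hpd]; apply existsb_eqb_In in Hpd.
  assert (HR : exists R, fpath step d R /\ step (last R d) = Some d /\
                         Permutation (z :: L) (d :: R)).
  { destruct (in_split _ _ Hpd) as [[|h l1] [l2 E]]; injection E as -> ->.
    - exists l2; auto.
    - destruct (fpath_rotate _ Hp Hl) as [H1 H2].
      exists (l2 ++ h :: l1); repeat split; [assumption..|].
      exact (Permutation_app_comm (h :: l1) (d :: l2)). }
  destruct HR as [R [HRp [HRl HRperm]]].
  assert (Hch : chain xs ys d = d :: R).
  { apply chain_of_cycle; [assumption..|eapply Permutation_NoDup; eauto|].
    apply Permutation_length in HRperm; pose proof (NoDup_incl_length Hnd Hincl).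
    cbn in *; lia. }
  exists d; repeat split; [assumption| |rewrite Hch; exact (Permutation_in _ HRperm Hx)].
  unfold is_start, closes, firstin; rewrite Hch, last_cons, HRl, Nat.eqb_refl.
  rewrite (find_ext _ p), Ef, Nat.eqb_refl; [apply orb_true_r|].
  intros u; unfold p; apply eq_true_iff_eq; rewrite !existsb_eqb_In.
  split; apply Permutation_in; [symmetry|]; assumption.
Qed.

Hypothesis length_eq : length xs = length ys.

(** Go backwards along [step] from [x]: either we leave [ys] (the start of an
    open chain) or we close a cycle; [k] bounds the remaining steps. *)
Lemma covered_by_backward_path x k z L : fpath step z L -> last L z = x ->
  NoDup (z :: L) -> incl (z :: L) xs -> length (z :: L) + k > length xs ->
  exists c, In c xs /\ is_start xs ys c = true /\ In x (chain xs ys c).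
Proof.
  revert z L; induction k as [|k IH]; intros z L Hp Hlast Hnd Hincl Hk;
    pose proof (NoDup_incl_length Hnd Hincl) as HL; [lia|].
  destruct (in_dec Nat.eq_dec z ys) as [Hz|Hz].
  - destruct (lookup_onto xs ys z xs_NoDup length_eq Hz) as [z' Hz'].
    destruct (in_dec Nat.eq_dec z' (z :: L)) as [Hin|Hin].
    + destruct (in_split _ _ Hin) as [l1 [[|v l2] E]].
      * assert (last L z = z') by (rewrite <- (last_cons z L z), E; apply last_last).
        apply (cycle_covered z L); [assumption|assumption|congruence|assumption|].
        rewrite <- Hlast; apply last_in.
      * exfalso; pose proof (fpath_step _ Hp E) as Hs; rewrite Hz' in Hs.
        injection Hs as ->; apply in_tail_of_split in E; inversion Hnd; auto.
    + apply (IH z' (z :: L)); [constructor; assumption|now rewrite last_cons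
            |now constructor| |cbn in *; lia].
      intros u [<-|Hu]; [exact (proj1 (lookup_Some_in _ _ _ _ Hz'))|exact (Hincl u Hu)].
  - exists z; repeat split; [exact (Hincl z (or_introl eq_refl))| |].
    + unfold is_start; apply orb_true_iff; left; apply negb_true_iff.
      apply not_true_iff_false; now rewrite existsb_eqb_In.
    + inversion Hnd; subst; unfold chain; cbn in HL.
      rewrite (walk_prefix z L (length xs) z Hp) by (assumption || lia).
      destruct (last_in L z) as [H|H]; [now left|].
      right; apply in_or_app; now left.
Qed.

Lemma covered_by_start x : In x xs ->
  exists c, In c xs /\ is_start xs ys c = true /\ In x (chain xs ys c).
Proof.
  intros Hx; apply (covered_by_backward_path x (length xs) x []);
    [constructor|reflexivity|repeat constructor; tauto| |cbn; lia].
  intros u [<-|[]]; exact Hx.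
Qed.

Lemma chain_swaps_id c L b : ~ In c L -> is_start xs ys c = true ->
  In b (chain xs ys c) -> perm_app (flat_map (chain_swaps xs ys) L) b = b.
Proof.
  induction L as [|e L IH]; intros HcL Hc Hb; [reflexivity|].
  cbn [flat_map]; rewrite perm_app_app, IH by (cbn in HcL; tauto).
  unfold chain_swaps; destruct (is_start xs ys e) eqn:He; [|reflexivity].
  apply cycle_swaps_id; intros Hbe.
  apply HcL; left; exact (chain_disjoint e c b He Hc Hbe Hb).
Qed.

Lemma chain_swaps_run c L b : NoDup L -> In c L -> is_start xs ys c = true ->
  In b (chain xs ys c) ->
  perm_app (flat_map (chain_swaps xs ys) L) b = perm_app (cycle_swaps (chain xs ys c)) b.
Proof.
  induction 1 as [|e L HeL HL IH]; intros HcL Hc Hb; [destruct HcL|].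
  cbn [flat_map]; rewrite perm_app_app.
  destruct HcL as [<-|HcL].
  - rewrite (chain_swaps_id e L b HeL Hc Hb); unfold chain_swaps; now rewrite Hc.
  - rewrite IH by assumption; unfold chain_swaps.
    destruct (is_start xs ys e) eqn:He; [|reflexivity].
    apply cycle_swaps_id; intros Hbe.
    pose proof (chain_disjoint e c _ He Hc Hbe (cycle_swaps_stable _ _ Hb)); congruence.
Qed.

Lemma Psi_lookup a y : In a xs -> lookup xs ys a = Some y -> perm_app (Psi xs ys) a = y.
Proof.
  intros Ha Hay; destruct (covered_by_start a Ha) as [c [Hc [Hs Hac]]].
  change (Psi xs ys) with (flat_map (chain_swaps xs ys) xs).
  rewrite (chain_swaps_run c xs a xs_NoDup Hc Hs Hac); exact (chain_step c a y Hac Hay).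
Qed.

Lemma Psi_maps_into a : In a xs -> In (perm_app (Psi xs ys) a) ys.
Proof.
  intros Ha; destruct (lookup_defined xs ys a length_eq Ha) as [y Hy].
  rewrite (Psi_lookup a y Ha Hy); exact (proj2 (lookup_Some_in _ _ _ _ Hy)).
Qed.

End Psi.

Lemma Psi_moved xs ys a : perm_app (Psi xs ys) a <> a -> In a xs \/ In a ys.
Proof.
  intros H; destruct (perm_app_moved _ _ H) as [u [v [Huv Ha]]].
  apply in_flat_map in Huv as [d [Hd Huv]]; unfold chain_swaps in Huv.
  destruct (is_start xs ys d); [|destruct Huv].
  apply cycle_swaps_support in Huv as [Hu Hv].
  destruct Ha as [->| ->]; [destruct (chain_in _ _ _ _ Hu)|destruct (chain_in _ _ _ _ Hv)];
    subst; auto.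
Qed.

(** * The translation of meta-terms *)

Definition mterm_nested_ind (P : mterm -> Prop)
  (HVar : forall a, P (MVar a))
  (HMeta : forall Z ts, Forall P ts -> P (MMeta Z ts))
  (HAbs : forall a s, P s -> P (MAbs a s))
  (HApp : forall f s, P s -> P (MApp f s))
  (HTup : forall ts, Forall P ts -> P (MTup ts)) : forall t, P t :=
  fix F t := match t with
  | MVar a => HVar a
  | MMeta Z ts => HMeta Z ts ((fix G ts : Forall P ts := match ts with
                              | [] => Forall_nil P
                              | u :: us => Forall_cons u (F u) (G us) end) ts)
  | MAbs a s => HAbs a s (F s)
  | MApp f s => HApp f s (F s)
  | MTup ts => HTup ts ((fix G ts : Forall P ts := match ts with
                         | [] => Forall_nil P
                         | u :: us => Forall_cons u (F u) (G us) end) ts)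
  end.

Fixpoint trans_list (phi : mvar -> list atom) (seen : list mvar) (ts : list mterm)
  : list nterm * list mvar :=
  match ts with
  | [] => ([], seen)
  | u :: us => let (u', s1) := trans phi seen u in
               let (us', s2) := trans_list phi s1 us in (u' :: us', s2)
  end.

Lemma trans_tup phi ts seen :
  trans phi seen (MTup ts) = (NTup (fst (trans_list phi seen ts)), snd (trans_list phi seen ts)).
Proof.
  revert seen; induction ts as [|u us IH]; intros seen; [reflexivity|].
  specialize (IH (snd (trans phi seen u))); cbn [trans trans_list] in *.
  destruct (trans phi seen u) as [u' s1]; cbn [snd] in IH.
  match type of IH with context [let (_, _) := ?e in _] => destruct e end.
  destruct (trans_list phi s1 us); cbn in *; congruence.
Qed.

Lemma trans_abs phi seen a s :
  trans phi seen (MAbs a s) = (NAbs a (fst (trans phi seen s)), snd (trans phi seen s)).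
Proof. cbn; now destruct (trans phi seen s). Qed.

Lemma trans_app phi seen f s :
  trans phi seen (MApp f s) = (NApp f (fst (trans phi seen s)), snd (trans phi seen s)).
Proof. cbn; now destruct (trans phi seen s). Qed.

Lemma trans_list_cons phi seen u us : trans_list phi seen (u :: us) =
  (fst (trans phi seen u) :: fst (trans_list phi (snd (trans phi seen u)) us),
   snd (trans_list phi (snd (trans phi seen u)) us)).
Proof.
  cbn; destruct (trans phi seen u) as [u' s1]; cbn.
  now destruct (trans_list phi s1 us).
Qed.

Lemma meta_occs_tup_cons B u us :
  meta_occs B (MTup (u :: us)) = meta_occs B u ++ meta_occs B (MTup us).
Proof. reflexivity. Qed.

Lemma mvar_occs_tup_cons B u us :
  mvar_occs B (MTup (u :: us)) = mvar_occs B u ++ mvar_occs B (MTup us).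
Proof. reflexivity. Qed.

Lemma natom_occs_tup_cons B u us :
  natom_occs B (NTup (u :: us)) = natom_occs B u ++ natom_occs B (NTup us).
Proof. reflexivity. Qed.

Lemma nvar_occs_tup_cons B u us :
  nvar_occs B (NTup (u :: us)) = nvar_occs B u ++ nvar_occs B (NTup us).
Proof. reflexivity. Qed.

Lemma natom_occs_trans phi u seen B0 B a :
  In (B, a) (natom_occs B0 (fst (trans phi seen u))) -> In (B, a) (mvar_occs B0 u).
Proof.
  revert seen B0; induction u as [a'|Z ts _|a' s IH|f s IH|ts IH] using mterm_nested_ind;
    intros seen B0 H.
  - exact H.
  - cbn in H; destruct (existsb (Nat.eqb Z) seen); destruct H.
  - rewrite trans_abs in H; exact (IH _ _ H).
  - rewrite trans_app in H; exact (IH _ _ H).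
  - rewrite trans_tup in H; cbn [fst] in H; revert seen H.
    induction IH as [|u us Hu _ IHus]; intros seen H; [destruct H|].
    rewrite trans_list_cons in H; cbn [fst] in H; rewrite natom_occs_tup_cons in H; rewrite mvar_occs_tup_cons.
    apply in_app_or in H as [H|H]; apply in_or_app; [left; exact (Hu _ _ H)|right; exact (IHus _ H)].
Qed.

Lemma trans_seen_incr phi u seen Z : In Z seen -> In Z (snd (trans phi seen u)).
Proof.
  revert seen; induction u as [a|Z' ts _|a s IH|f s IH|ts IH] using mterm_nested_ind;
    intros seen H.
  - exact H.
  - cbn; destruct (existsb (Nat.eqb Z') seen); [exact H|now right].
  - rewrite trans_abs; exact (IH _ H).
  - rewrite trans_app; exact (IH _ H).
  - rewrite trans_tup; cbn [snd]; revert seen H.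
    induction IH as [|u us Hu _ IHus]; intros seen H; [exact H|].
    rewrite trans_list_cons; exact (IHus _ (Hu _ H)).
Qed.

(** The translation does not descend into the arguments of a meta-variable, so
    we require them to contain no meta-variables. *)
Definition no_nested_metas (B0 : list atom) (u : mterm) : Prop :=
  forall B Z ts, In (B, Z, ts) (meta_occs B0 u) -> meta_occs B (MTup ts) = [].

Lemma no_nested_metas_tup_cons B0 u us : no_nested_metas B0 (MTup (u :: us)) ->
  no_nested_metas B0 u /\ no_nested_metas B0 (MTup us).
Proof.
  intros HN; split; intros B Z ts H; apply (HN B Z ts);
    rewrite meta_occs_tup_cons; apply in_or_app; auto.
Qed.

Lemma trans_seen_metas phi u seen B0 Z B args : no_nested_metas B0 u ->
  In (B, Z, args) (meta_occs B0 u) -> In Z (snd (trans phi seen u)).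
Proof.
  revert seen B0; induction u as [a|Z' ts _|a s IH|f s IH|ts IH] using mterm_nested_ind;
    intros seen B0 HN H.
  - destruct H.
  - change (meta_occs B0 (MMeta Z' ts)) with ((B0, Z', ts) :: meta_occs B0 (MTup ts)) in H.
    rewrite (HN B0 Z' ts (or_introl eq_refl)) in H.
    destruct H as [[= <- <- <-]|[]]; cbn.
    destruct (existsb (Nat.eqb Z') seen) eqn:E; [|now left].
    now apply existsb_eqb_In in E.
  - rewrite trans_abs; exact (IH _ _ HN H).
  - rewrite trans_app; exact (IH _ _ HN H).
  - rewrite trans_tup; cbn [snd]; revert seen HN H.
    induction IH as [|u us Hu _ IHus]; intros seen HN H; [destruct H|].
    apply no_nested_metas_tup_cons in HN as [HNu HNus].
    rewrite trans_list_cons; rewrite meta_occs_tup_cons in H.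
    apply in_app_or in H as [H|H]; [|exact (IHus _ HNus H)].
    pose proof (trans_seen_incr phi (MTup us) _ _ (Hu seen _ HNu H)) as Hs.
    now rewrite trans_tup in Hs.
Qed.

Definition occ_of (Z : mvar) (o : list atom * mvar * list mterm) : bool :=
  match o with (_, Z', _) => Z' =? Z end.

Definition susp_origin (phi : mvar -> list atom) (seen : list mvar) (B0 : list atom)
  (u : mterm) (B : list atom) (p : perm) (Z : mvar) : Prop :=
  exists args, In (B, Z, args) (meta_occs B0 u) /\
    (p = Psi (phi Z) (arg_atoms args) \/
     (p = [] /\ ~ In Z seen /\ find (occ_of Z) (meta_occs B0 u) = Some (B, Z, args))).

Lemma susp_origin_tup_head phi seen B0 u us B p Z :
  susp_origin phi seen B0 u B p Z -> susp_origin phi seen B0 (MTup (u :: us)) B p Z.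
Proof.
  intros [args [Hin Hp]]; exists args; rewrite meta_occs_tup_cons.
  split; [apply in_or_app; now left|].
  destruct Hp as [Hp|[Hp [Hs Hf]]]; [now left|right; split; [|split]];
    [assumption..|now apply find_app_Some].
Qed.

Lemma susp_origin_tup_tail phi seen B0 u us B p Z : no_nested_metas B0 u ->
  susp_origin phi (snd (trans phi seen u)) B0 (MTup us) B p Z ->
  susp_origin phi seen B0 (MTup (u :: us)) B p Z.
Proof.
  intros HN [args [Hin Hp]]; exists args; rewrite meta_occs_tup_cons.
  split; [apply in_or_app; now right|].
  destruct Hp as [Hp|[Hp [Hs Hf]]]; [now left|right; split; [|split]];
    [assumption|intros H; exact (Hs (trans_seen_incr phi u _ _ H))|].
  rewrite find_app_None; [assumption|].
  destruct (find (occ_of Z) (meta_occs B0 u)) as [[[B' Z'] args']|] eqn:Ef; [|reflexivity].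
  exfalso; apply find_some in Ef as [Hin' HZ]; apply Nat.eqb_eq in HZ; subst Z'.
  exact (Hs (trans_seen_metas phi u seen _ _ _ _ HN Hin')).
Qed.

Lemma nvar_occs_trans phi u seen B0 B p Z : no_nested_metas B0 u ->
  In (B, p, Z) (nvar_occs B0 (fst (trans phi seen u))) -> susp_origin phi seen B0 u B p Z.
Proof.
  revert seen B0; induction u as [a|Z' ts _|a s IH|f s IH|ts IH] using mterm_nested_ind;
    intros seen B0 HN H.
  - destruct H.
  - cbn in H; destruct (existsb (Nat.eqb Z') seen) eqn:E;
      destruct H as [[= <- <- <-]|[]]; exists ts; split; try now left.
    right; split; [reflexivity|split].
    + now rewrite <- existsb_eqb_In, E.
    + cbn; now rewrite Nat.eqb_refl.
  - rewrite trans_abs in H; exact (IH _ _ HN H).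
  - rewrite trans_app in H; exact (IH _ _ HN H).
  - rewrite trans_tup in H; cbn [fst] in H; revert seen HN H.
    induction IH as [|u us Hu _ IHus]; intros seen HN H; [destruct H|].
    pose proof (no_nested_metas_tup_cons _ _ _ HN) as [HNu HNus].
    rewrite trans_list_cons in H; cbn [fst] in H; rewrite nvar_occs_tup_cons in H.
    apply in_app_or in H as [H|H].
    + exact (susp_origin_tup_head _ _ _ _ us _ _ _ (Hu _ _ HNu H)).
    + exact (susp_origin_tup_tail _ _ _ _ _ _ _ _ HNu (IHus _ HNus H)).
Qed.

(** * Closedness of [Left t] *)

(** [dom X] plays the role of [Phi_t(X)]: the atoms [X] may depend on. *)
Definition closed_susp (D : fctx) (dom B : list atom) (p : perm) (X : mvar) : Prop :=
  (forall a, In a dom -> In (perm_app p a) B) /\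
  (forall a, ~ In a dom -> perm_app p a <> a -> In a B) /\
  (forall a, In a B -> ~ In a dom -> In (a, X) D).

Lemma nclosed_of_closed_susps D s (dom : mvar -> list atom) :
  (forall B a, In (B, a) (natom_occs [] s) -> In a B) ->
  (forall B p X, In (B, p, X) (nvar_occs [] s) -> closed_susp D (dom X) B p X) ->
  nclosed D s.
Proof.
  intros Hatoms Hsusp; split; [exact Hatoms|split].
  - intros B1 p1 B2 p2 X a H1 H2 Hp1.
    destruct (Hsusp _ _ _ H1) as [_ [Hmoved1 Hfresh1]], (Hsusp _ _ _ H2) as [Hdom2 _].
    destruct (in_dec Nat.eq_dec a (dom X)) as [Ha|Ha]; [left; exact (Hdom2 a Ha)|right].
    apply Hfresh1; [|exact Ha].
    destruct (Nat.eq_dec (perm_app p1 a) a) as [E|E]; [congruence|exact (Hmoved1 a Ha E)].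
  - intros B1 p1 B2 p2 X a H1 H2 Hne Hnot.
    destruct (Hsusp _ _ _ H1) as [Hdom1 [Hmoved1 Hfresh1]].
    destruct (Hsusp _ _ _ H2) as [Hdom2 [Hmoved2 Hfresh2]].
    destruct (in_dec Nat.eq_dec a (dom X)) as [Ha|Ha].
    + exfalso; destruct Hnot as [Hn|Hn]; apply Hn; auto.
    + destruct (Nat.eq_dec (perm_app p1 a) a) as [E|E].
      * apply Hfresh2; [apply Hmoved2; [|congruence]|]; exact Ha.
      * exact (Hfresh1 a (Hmoved1 a Ha E) Ha).
Qed.

Lemma arg_atoms_map_MVar xs : arg_atoms (map MVar xs) = xs.
Proof. induction xs as [|x xs IH]; cbn; [reflexivity|]; now f_equal. Qed.

Lemma meta_occs_map_MVar B xs : meta_occs B (MTup (map MVar xs)) = [].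
Proof.
  induction xs as [|x xs IH]; [reflexivity|].
  cbn [map]; now rewrite meta_occs_tup_cons, IH.
Qed.

Lemma Phi_leftmost t Z B args :
  find (occ_of Z) (meta_occs [] t) = Some (B, Z, args) -> Phi t Z = arg_atoms args.
Proof.
  intros H; unfold Phi.
  match goal with |- context [find ?q ?l] => change (find q l) with (find (occ_of Z) l) end.
  now rewrite H.
Qed.

Lemma Delta_intro t B Z args a : In (B, Z, args) (meta_occs [] t) ->
  In a B -> ~ In a (Phi t Z) -> In (a, Z) (Delta t).
Proof.
  intros Hocc Ha Hna; apply in_flat_map; exists (B, Z, args); split; [exact Hocc|].
  apply in_map_iff; exists a; split; [reflexivity|]; apply filter_In; split; [exact Ha|].
  apply negb_true_iff, not_true_iff_false; now rewrite existsb_eqb_In.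
Qed.

Section LeftHandSide.

Variable t : mterm.
Hypothesis t_lhs : crs_lhs t.

Lemma lhs_no_nested_metas : no_nested_metas [] t.
Proof.
  intros B Z ts Hin; destruct (proj1 (proj2 (proj2 t_lhs)) B Z ts Hin) as [xs [-> _]].
  apply meta_occs_map_MVar.
Qed.

Lemma lhs_Phi B Z args : In (B, Z, args) (meta_occs [] t) ->
  NoDup (Phi t Z) /\ length (Phi t Z) = length args.
Proof.
  destruct t_lhs as [_ [_ [Hargs Harity]]]; intros Hin.
  destruct (find (occ_of Z) (meta_occs [] t)) as [[[B' Z'] args']|] eqn:Ef.
  - pose proof Ef as [Hin' HZ]%find_some; apply Nat.eqb_eq in HZ; subst Z'.
    rewrite (Phi_leftmost _ _ _ _ Ef).
    destruct (Hargs _ _ _ Hin') as [xs [-> [Hnd _]]].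
    rewrite arg_atoms_map_MVar, <- (Harity _ _ _ _ _ Hin' Hin), length_map; now split.
  - apply (find_none _ _ Ef) in Hin; cbn in Hin; now rewrite Nat.eqb_refl in Hin.
Qed.

Lemma Left_closed_susp B p Z : In (B, p, Z) (nvar_occs [] (snd (Left t))) ->
  closed_susp (fst (Left t)) (Phi t Z) B p Z.
Proof.
  intros Hin.
  destruct (nvar_occs_trans _ _ _ _ _ _ _ lhs_no_nested_metas Hin) as [args [Hocc Hp]].
  destruct (proj1 (proj2 (proj2 t_lhs)) _ _ _ Hocc) as [ys [-> [Hys HysB]]].
  destruct (lhs_Phi _ _ _ Hocc) as [HPhi HPhi_len].
  rewrite length_map in HPhi_len; rewrite arg_atoms_map_MVar in Hp.
  split; [|split; [|intros a; exact (Delta_intro t B Z _ a Hocc)]].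
  - destruct Hp as [->|[-> [_ Hf]]]; intros a Ha; apply HysB.
    + exact (Psi_maps_into _ _ Hys HPhi HPhi_len a Ha).
    + now rewrite (Phi_leftmost _ _ _ _ Hf), arg_atoms_map_MVar in Ha.
  - destruct Hp as [->|[-> _]]; intros a Ha Hmoved; [|now contradiction Hmoved].
    destruct (Psi_moved _ _ _ Hmoved) as [HaPhi|Hays]; [contradiction|exact (HysB a Hays)].
Qed.

End LeftHandSide.

Theorem mainTheorem12 (t : mterm) :
  crs_lhs t -> barendregt t ->
  nclosed (fst (Left t)) (snd (Left t)).
Proof.
  (* Barendregt's convention is not needed. *)
  intros Hlhs _.
  apply (nclosed_of_closed_susps _ _ (Phi t)).
  - intros B a Hin; apply (proj1 (proj2 Hlhs)).
    exact (natom_occs_trans _ _ _ _ _ _ Hin).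
  - intros B p X; exact (Left_closed_susp t Hlhs B p X).
Qed.
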